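(* Let $(S,K,I)$ be a split graph such that $\Phi(S)$ is simple and complete, with $K=\bigcup_{v\in I}N_S(v)$. Put $\omega=|K|$, $\alpha=|I|$, assume $\alpha\ge2$, and let $U$ be the set of universal vertices of $S$. Then: (1) $S$ is homogeneous; (2) if $d$ is the common degree in $S$ of the vertices of $I$, then $1\le d\le \omega-1$; (3) $|U|\in\{d-1,\ d+1-\alpha\}$; (4) $|U|=d-1$ if and only if $\omega=\alpha+d-1$; (5) $|U|=d+1-\alpha$ if and only if $\omega=d+1$; (6) $\omega=\alpha+|U|$ (in particular $\omega\ge\alpha$); (7) $S$ is active if and only if $U=\varnothing$; (8) if $S$ is active, then $\omega=\alpha$ and $d\in\{1,\omega-1\}$; (9) if $\omega=\alpha$ or $d=1$, then $S$ is active.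
   Context: All graphs are finite and simple. A split graph is a graph $S$ whose vertex set is a disjoint union $V(S)=K\,\dot\cup\,I$ with $K$ a clique and $I$ an independent set; $(K,I)$ is called a bipartition of $S$, and $(S,K,I)$ denotes $S$ together with this fixed bipartition. A 2-switch in a graph $G$ is performed on four distinct vertices $a,b,c,d$ with $ab,cd\in E(G)$ and $ac,bd\notin E(G)$: it deletes $ab,cd$ and adds $ac,bd$; $a,b,c,d$ are said to participate in it. A vertex is active in $G$ if it participates in some 2-switch on $G$; $G$ is active if all its vertices are active. A vertex is universal if it is adjacent to all other vertices. For a split graph $(S,K,I)$ and distinct $u,v\in I$, $\sigma_{uv}(S)$ is the number of induced subgraphs of $S$ isomorphic to $P_4$ containing both $u$ and $v$. The factor graph $\Phi(S)$ is the loopless multigraph with vertex set $I$ having exactly $\sigma_{uv}(S)$ parallel edges between $u$ and $v$; it is simple if $\sigma_{uv}(S)\in\{0,1\}$ for all $u,v$. Graph notions (connected, complete, clique, etc.) applied to $\Phi(S)$ refer to its underlying simple graph, in which $u\sim v$ iff $\sigma_{uv}(S)\ge1$. A vertex $w$ of $(S,K,I)$ is swing if $N_S(w)=K\setminus\{w\}$. $(S,K,I)$ is balanced if $|K|=\omega(S)$ and $|I|=\alpha(S)$; it is known that $S$ is balanced iff it has no swing vertex. $(S,K,I)$ is homogeneous if it is balanced and all vertices of $I$ have the same degree in $S$. *)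

(* A simple graph on a finite vertex type T is a symmetric,
   irreflexive relation e : rel T (hypotheses in the theorem). *)
From mathcomp Require Import all_boot.
Set Implicit Arguments. Unset Strict Implicit. Unset Printing Implicit Defensive.

Section SplitDefs.
Variable T : finType.
Variable e : rel T.

Definition nbhd (v : T) : {set T} := [set w | e v w].
Definition deg (v : T) : nat := #|nbhd v|.

Definition is_clique (X : {set T}) : bool :=
  [forall x in X, forall y in X, (x != y) ==> e x y].
Definition is_indep (X : {set T}) : bool :=
  [forall x in X, forall y in X, ~~ e x y].

Definition clique_number : nat := \max_(X : {set T} | is_clique X) #|X|.
Definition indep_number : nat := \max_(X : {set T} | is_indep X) #|X|.

Definition split_bipartition (K I : {set T}) : Prop :=
  [/\ K :|: I = setT, K :&: I = set0, is_clique K & is_indep I].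

Definition induces_P4 (X : {set T}) : bool :=
  [exists a, exists b, exists c, exists d,
    [&& X == [set a; b; c; d],
        uniq [:: a; b; c; d],
        e a b, e b c, e c d,
        ~~ e a c, ~~ e a d & ~~ e b d]].

Definition sigma (u v : T) : nat :=
  #|[set X : {set T} | [&& u \in X, v \in X & induces_P4 X]]|.

Definition factor_simple (I : {set T}) : Prop :=
  forall u v, u \in I -> v \in I -> u != v -> sigma u v <= 1.
Definition factor_complete (I : {set T}) : Prop :=
  forall u v, u \in I -> v \in I -> u != v -> 1 <= sigma u v.

Definition two_switch (a b c d : T) : Prop :=
  [/\ uniq [:: a; b; c; d], e a b, e c d, ~~ e a c & ~~ e b d].

Definition is_active_vertex (x : T) : Prop :=
  exists a b c d, two_switch a b c d /\ x \in [:: a; b; c; d].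

Definition is_active_graph : Prop := forall x, is_active_vertex x.

Definition universal_set : {set T} :=
  [set x | [forall y, (y != x) ==> e x y]].

Definition balanced (K I : {set T}) : Prop :=
  #|K| = clique_number /\ #|I| = indep_number.

Definition homogeneous (K I : {set T}) : Prop :=
  balanced K I /\ (forall u v, u \in I -> v \in I -> deg u = deg v).

End SplitDefs.

From mathcomp Require Import all_boot zify.
Set Implicit Arguments. Unset Strict Implicit. Unset Printing Implicit Defensive.

(* Two vertices u, v of I can only be the two ends of an induced P4, so the
   P4s through u and v correspond to pairs (private neighbour of u, private
   neighbour of v); as Phi(S) is simple and complete, N(u) \ N(v) is a
   single vertex.  The neighbourhoods of the vertices of I are thus d-sets
   pairwise differing in one element: either they all contain a common
   (d-1)-set, or they all lie in a common (d+1)-set.  Their union is K and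
   their intersection is U, which yields |K| = |I| + |U| with |U| = d - 1 or
   |U| = d + 1 - |I|.  Universal vertices take part in no 2-switch, and any
   other vertex is put into one using a non-neighbour and private
   neighbours. *)

Section FinsetFacts.
Variable T : finType.
Implicit Types A B : {set T}.

Lemma eq_card_of_cardsD A B : #|A :\: B| = #|B :\: A| -> #|A| = #|B|.
Proof. by move=> AB; rewrite -(cardsID B A) -(cardsID A B) setIC AB. Qed.

Lemma cards1_eq_set1 A x : #|A| = 1 -> x \in A -> A = [set x].
Proof. by move=> A1 xA; apply/eqP; rewrite eq_sym eqEcard sub1set xA cards1 A1. Qed.

Lemma subD1_of_cardsD_eq1 A B x : #|A :\: B| = 1 -> x \in A :\: B -> A :\ x \subset B.
Proof.
move=> AB1 xAB; apply/subsetP=> y; rewrite in_setD1 => /andP[yx yA].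
apply: contraNT yx => yB; rewrite -in_set1 -(cards1_eq_set1 AB1 xAB).
by rewrite inE yB.
Qed.

Lemma disjoint_cards1 A B : #|A| = 1 -> #|B| = 1 -> A != B -> [disjoint A & B].
Proof.
move=> A1 B1; apply: contraNT; rewrite -setI_eq0 => /set0Pn[x].
by rewrite inE => /andP[xA xB]; rewrite (cards1_eq_set1 A1 xA) (cards1_eq_set1 B1 xB).
Qed.

Lemma card_bigcup_cards1 (J : finType) (I : {set J}) (B : J -> {set T}) :
  {in I, forall w, #|B w| = 1} -> {in I &, injective B} ->
  #|\bigcup_(w in I) B w| = #|I|.
Proof.
move=> B1 injB.
have triv : trivIset (B @: I).
  apply/trivIsetP=> _ _ /imsetP[u uI ->] /imsetP[v vI ->].
  exact: disjoint_cards1 (B1 u uI) (B1 v vI).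
rewrite -cover_imset -(eqP triv) big_imset //= -sum1_card.
by apply: eq_bigr => w; apply: B1.
Qed.

End FinsetFacts.

Section NearFamily.
Variables (J T : finType) (I : {set J}) (A : J -> {set T}) (d : nat).
Hypothesis cardA : {in I, forall w, #|A w| = d}.
Hypothesis nearA : {in I &, forall u v, u != v -> #|A u :\: A v| = 1}.
Hypothesis twoI : 1 < #|I|.

Lemma near_family_inj : {in I &, injective A}.
Proof.
move=> u v uI vI Auv; apply/eqP; apply: contraT => uv.
by have := nearA uI vI uv; rewrite Auv setDv cards0.
Qed.

Lemma cardsI_near u v : u \in I -> v \in I -> u != v -> #|A u :&: A v| + 1 = d.
Proof. by move=> uI vI uv; rewrite -(nearA uI vI uv) cardsID cardA. Qed.

Lemma cardsU_near u v : u \in I -> v \in I -> u != v -> #|A u :|: A v| = d.+1.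
Proof.
move=> uI vI uv; move: (cardsUI (A u) (A v)) (cardsI_near uI vI uv).
by rewrite !cardA //; lia.
Qed.

Lemma sunflower_core (C : {set T}) :
  #|C| + 1 = d -> {in I, forall w, C \subset A w} ->
  \bigcap_(w in I) A w = C /\ #|\bigcup_(w in I) A w| = #|I| + #|C|.
Proof.
move=> cardC CA; have [u [v [uI vI uv]]] := card_gt1P twoI.
split.
  apply/eqP; rewrite eq_sym eqEcard; apply/andP; split; first by apply/bigcapsP.
  rewrite -(leq_add2r 1) cardC -(cardsI_near uI vI uv) leq_add2r.
  by apply: subset_leq_card; rewrite subsetI !bigcap_inf.
have petal1 w : w \in I -> #|A w :\: C| = 1.
  by move=> wI; rewrite cardsD (setIidPr (CA w wI)) cardA //; lia.
have petal_inj : {in I &, injective (fun w => A w :\: C)}.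
  move=> w w' wI w'I /= eqw; apply: near_family_inj => //.
  by rewrite -(setID (A w) C) -(setID (A w') C) !(setIidPr (CA _ _)) // eqw.
have CU : C \subset \bigcup_(w in I) A w.
  exact: subset_trans (CA u uI) (bigcup_sup _ uI).
rewrite -(cardsID C) (setIidPr CU) addnC -(card_bigcup_cards1 petal1 petal_inj).
congr (_ + _); apply: eq_card => x; rewrite inE.
apply/andP/bigcupP=> [[xC /bigcupP[w wI xw]]|[w wI]].
  by exists w; rewrite ?inE ?xC.
by rewrite inE => /andP[xC xw]; split=> //; apply/bigcupP; exists w.
Qed.

Lemma cosunflower_hull (D : {set T}) :
  #|D| = d.+1 -> {in I, forall w, A w \subset D} ->
  \bigcup_(w in I) A w = D /\ #|\bigcap_(w in I) A w| + #|I| = d.+1.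
Proof.
move=> cardD AD; have [u [v [uI vI uv]]] := card_gt1P twoI.
split.
  apply/eqP; rewrite eqEcard; apply/andP; split; first by apply/bigcupsP.
  have uvU : A u :|: A v \subset \bigcup_(w in I) A w.
    by rewrite subUset !bigcup_sup.
  by apply: leq_trans (subset_leq_card uvU); rewrite cardD cardsU_near.
have gap1 w : w \in I -> #|D :\: A w| = 1.
  by move=> wI; rewrite cardsD (setIidPr (AD w wI)) cardD cardA // subSnn.
have gap_inj : {in I &, injective (fun w => D :\: A w)}.
  have gapK w : w \in I -> D :\: (D :\: A w) = A w.
    by move=> wI; rewrite setDDr setDv set0U (setIidPr (AD w wI)).
  move=> w w' wI w'I /= eqw; apply: near_family_inj => //.
  by rewrite -(gapK w wI) -(gapK w' w'I) eqw.
have capD : \bigcap_(w in I) A w \subset D.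
  exact: subset_trans (bigcap_inf _ uI) (AD u uI).
rewrite -cardD -(cardsID (\bigcap_(w in I) A w) D) (setIidPr capD).
rewrite -(card_bigcup_cards1 gap1 gap_inj); congr (_ + _); apply: eq_card => x.
rewrite [RHS]inE; apply/bigcupP/andP=> [[w wI]|[xcap xD]].
  rewrite inE => /andP[xw xD]; split=> //.
  by apply: contra xw => /bigcapP; apply.
have : ~~ [forall w in I, x \in A w].
  by apply: contra xcap => /forall_inP xA; apply/bigcapP.
by rewrite negb_forall_in => /exists_inP[w wI xw]; exists w; rewrite ?inE ?xw.
Qed.

Lemma sunflower_or_cosunflower :
  (exists2 C : {set T}, #|C| + 1 = d & {in I, forall w, C \subset A w}) \/
  (exists2 D : {set T}, #|D| = d.+1 & {in I, forall w, A w \subset D}).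
Proof.
have [u [v [uI vI uv]]] := card_gt1P twoI.
set C := A u :&: A v; set D := A u :|: A v.
have cardC : #|C| + 1 = d := cardsI_near uI vI uv.
have [CA|] := boolP [forall w in I, C \subset A w].
  by left; exists C => // w; apply: (forall_inP CA).
rewrite negb_forall_in => /exists_inP[w1 w1I /subsetPn[c cC cw1]].
have [cu cv] : c \in A u /\ c \in A v by apply/setIP.
have cD : c \in D by rewrite inE cu.
have cardD : #|D| = d.+1 := cardsU_near uI vI uv.
right; exists D => // w wI; apply/subsetP=> x xw; apply: contraT => xD.
(* [A w1] is [D] minus [c], and [A w] is [C] plus [x]; so both [x] and [c]
   lie in [A w :\: A w1]. *)
have ne_w1 w' : c \in A w' -> w' != w1 by apply: contraTneq => ->.
have Dc_w1 : D :\ c \subset A w1.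
  by rewrite setDUl subUset !subD1_of_cardsD_eq1 ?nearA ?ne_w1 ?inE ?cw1 ?cu ?cv.
have cardDc : #|D :\ c| = #|A w1|.
  by move: cardD (cardsD1 c D); rewrite cD cardA // => -> [].
have xw1 : x \notin A w1.
  by move/(subset_cardP cardDc): Dc_w1 => <-; rewrite inE (negbTE xD) andbF.
have ne_w w' : x \notin A w' -> w != w' by apply: contraNneq => <-.
have [xu xv] : x \notin A u /\ x \notin A v by move: xD; rewrite inE negb_or => /andP.
have wx_C : A w :\ x \subset C.
  by rewrite subsetI !subD1_of_cardsD_eq1 ?nearA ?ne_w ?inE ?xw ?xu ?xv.
have cardwx : #|A w :\ x| = #|C|.
  by move: cardC (cardsD1 x (A w)); rewrite xw cardA // addn1 => <- [].
have cw : c \in A w.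
  by move/(subset_cardP cardwx): wx_C => wxC; move: cC; rewrite -wxC => /setD1P[].
have := nearA wI w1I (ne_w _ xw1).
have /subset_leq_card : [set x; c] \subset A w :\: A w1.
  by apply/subsetP=> y; rewrite !inE => /orP[] /eqP->; rewrite ?xw ?cw ?xw1 ?cw1.
rewrite cards2; case: eqP => [xc|_ le2 eq1]; first by rewrite xc cD in xD.
by move: le2; rewrite eq1.
Qed.

Lemma near_family_card :
  #|\bigcup_(w in I) A w| = #|I| + #|\bigcap_(w in I) A w| /\
  (#|\bigcap_(w in I) A w| + 1 = d \/ #|\bigcap_(w in I) A w| + #|I| = d.+1).
Proof.
case: sunflower_or_cosunflower => [[C cardC CA] | [D cardD AD]].
  by have [-> ->] := sunflower_core cardC CA; split; [|left].
by have [-> capD] := cosunflower_hull cardD AD; split; [lia | right].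
Qed.

End NearFamily.

Section Graphs.
Variables (T : finType) (e : rel T).
Hypothesis e_sym : symmetric e.

Lemma cliqueP (X : {set T}) :
  reflect {in X &, forall x y, x != y -> e x y} (is_clique e X).
Proof.
apply: (iffP forall_inP) => [clX x y xX yX | clX x xX].
  exact: implyP (forall_inP (clX x xX) y yX).
by apply/forall_inP=> y yX; apply/implyP; apply: clX.
Qed.

Lemma indepP (X : {set T}) :
  reflect {in X &, forall x y, ~~ e x y} (is_indep e X).
Proof.
apply: (iffP forall_inP) => [indX x y xX yX | indX x xX].
  exact: forall_inP (indX x xX) y yX.
by apply/forall_inP=> y yX; apply: indX.
Qed.

Lemma nonuniversal_of_nadj x y : x != y -> ~~ e x y -> x \notin universal_set e.
Proof.
move=> xy nexy; rewrite inE negb_forall; apply/existsP; exists y.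
by rewrite negb_imply eq_sym xy.
Qed.

Lemma active_vertex_nonuniversal x : is_active_vertex e x -> x \notin universal_set e.
Proof.
case=> [a [b [c [d [[abcd _ _ neac nebd] xabcd]]]]].
rewrite /= !inE !negb_or in abcd; case/and4P: abcd => /and3P[_ ac _] /andP[_ bd] _ _.
rewrite !inE in xabcd; case/or4P: xabcd => /eqP->.
- exact: nonuniversal_of_nadj ac neac.
- exact: nonuniversal_of_nadj bd nebd.
- by apply: (nonuniversal_of_nadj (y := a)); rewrite 1?eq_sym // e_sym.
- by apply: (nonuniversal_of_nadj (y := b)); rewrite 1?eq_sym // e_sym.
Qed.

End Graphs.

Section SplitGraph.
Variables (T : finType) (e : rel T) (K I : {set T}).
Hypothesis e_sym : symmetric e.
Hypothesis HS : split_bipartition e K I.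

Lemma split_indep_notin_clique x : x \in I -> x \notin K.
Proof.
case: HS => _ KI0 _ _ xI; apply/negP => xK.
by have := in_set0 x; rewrite -KI0 inE xK xI.
Qed.

Lemma split_indep_clique_neq x y : x \in I -> y \in K -> x != y.
Proof. by move=> xI; apply: contraTneq => <-; apply: split_indep_notin_clique. Qed.

Lemma split_notin_indep_clique x : x \notin I -> x \in K.
Proof.
case: HS => KI _ _ _ xI; have : x \in K :|: I by rewrite KI inE.
by rewrite inE (negbTE xI) orbF.
Qed.

Lemma split_clique_adj x y : x \in K -> y \in K -> x != y -> e x y.
Proof. by case: HS => _ _ /cliqueP clK _; apply: clK. Qed.

Lemma split_indep_nadj x y : x \in I -> y \in I -> ~~ e x y.
Proof. by case: HS => _ _ _ /indepP indI; apply: indI. Qed.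

Lemma split_indep_adj_clique u z : u \in I -> e u z -> z \in K.
Proof.
move=> uI euz; apply: split_notin_indep_clique; apply: contraL euz.
exact: split_indep_nadj.
Qed.

Lemma induces_P4_private u v b c :
  u \in I -> v \in I -> e u b -> ~~ e v b -> e v c -> ~~ e u c ->
  induces_P4 e [set u; b; c; v].
Proof.
move=> uI vI eub nevb evc neuc.
have [bK cK] := (split_indep_adj_clique uI eub, split_indep_adj_clique vI evc).
have uv : u != v by apply: contraNneq nevb => <-.
have bc : b != c by apply: contraNneq neuc => <-.
apply/existsP; exists u; apply/existsP; exists b; apply/existsP; exists c.
apply/existsP; exists v; rewrite eqxx /= !inE !negb_or uv bc.
rewrite !(split_indep_clique_neq uI) // ![_ == v]eq_sym !(split_indep_clique_neq vI) //.
by rewrite eub (split_clique_adj bK cK bc) e_sym evc neuc split_indep_nadj // e_sym.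
Qed.

(* In an induced P4 the two middle vertices are adjacent to non-adjacent
   vertices, so they lie in K; the vertices of I are thus the two ends. *)
Lemma induces_P4_private_nbhd u v (X : {set T}) :
  u \in I -> v \in I -> u != v -> u \in X -> v \in X -> induces_P4 e X ->
  exists b, b \in nbhd e u :\: nbhd e v.
Proof.
move=> uI vI uv uX vX /existsP[a /existsP[b /existsP[c /existsP[d]]]].
case/and5P=> /eqP XE abcd eab ebc /and4P[ecd neac nead nebd]; rewrite XE in uX vX.
rewrite /= !inE !negb_or in abcd; case/and4P: abcd => /and3P[_ ac _] /andP[_ bd] _ _.
have bI : b \notin I.
  apply: contraNN neac => bI.
  by apply: split_clique_adj ac; apply: (split_indep_adj_clique bI); rewrite // e_sym.
have cI : c \notin I.
  apply: contraNN nebd => cI.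
  by apply: split_clique_adj bd; apply: (split_indep_adj_clique cI); rewrite // e_sym.
have ends y : y \in I -> y \in [set a; b; c; d] -> (y == a) || (y == d).
  move=> yI; rewrite !inE -!orbA => /or4P[] /eqP yE; rewrite ?yE ?eqxx ?orbT //.
    by rewrite -yE yI in bI.
  by rewrite -yE yI in cI.
case/orP: (ends u uI uX) => /eqP uE; case/orP: (ends v vI vX) => /eqP vE;
  subst u v; try by rewrite eqxx in uv.
- by exists b; rewrite !inE eab e_sym nebd.
- by exists c; rewrite !inE neac e_sym ecd.
Qed.

Lemma private_nbhd u v :
  factor_complete e I -> u \in I -> v \in I -> u != v ->
  exists b, b \in nbhd e u :\: nbhd e v.
Proof.
move=> complete uI vI uv; have /card_gt0P[X] := complete u v uI vI uv.
by rewrite inE => /and3P[uX vX]; apply: induces_P4_private_nbhd.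
Qed.

(* Two private neighbours [b1], [b2] of [u] and one [c] of [v] give the two
   distinct induced P4s [u b1 c v] and [u b2 c v]. *)
Lemma cardsD_nbhd_eq1 u v :
  factor_simple e I -> factor_complete e I -> u \in I -> v \in I -> u != v ->
  #|nbhd e u :\: nbhd e v| = 1.
Proof.
move=> simple complete uI vI uv; apply/eqP; rewrite eqn_leq andbC.
have [b bP] := private_nbhd complete uI vI uv.
have -> /= : 0 < #|nbhd e u :\: nbhd e v| by apply/card_gt0P; exists b.
rewrite leqNgt; apply/negP.
case/card_gt1P=> b1 [b2 [b1P b2P b12]].
have [c] : exists c, c \in nbhd e v :\: nbhd e u.
  by apply: private_nbhd; rewrite 1?eq_sym.
rewrite !inE => /andP[neuc evc].
pose P4s := [set X : {set T} | [&& u \in X, v \in X & induces_P4 e X]].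
have P4_in b' : b' \in nbhd e u :\: nbhd e v -> [set u; b'; c; v] \in P4s.
  rewrite !inE => /andP[nevb eub]; rewrite !eqxx orbT /=.
  exact: induces_P4_private.
move: b2P; rewrite !inE => /andP[nevb2 eub2].
have b2_out : b2 \notin [set u; b1; c; v].
  rewrite !inE -!orbA !negb_or; apply/and4P; split.
  - by rewrite eq_sym (split_indep_clique_neq uI (split_indep_adj_clique uI eub2)).
  - by rewrite eq_sym.
  - by apply: contraNneq neuc => <-.
  - by apply: contraNneq (split_indep_nadj uI vI) => <-.
have : [set [set u; b1; c; v]; [set u; b2; c; v]] \subset P4s.
  by apply/subsetP=> X /set2P[]->; apply: P4_in; rewrite // !inE nevb2 eub2.
move/subset_leq_card; rewrite cards2.
have -> : [set u; b1; c; v] != [set u; b2; c; v].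
  by apply: contraNneq b2_out => ->; rewrite !inE eqxx !orbT.
by move=> /leq_trans/(_ (simple u v uI vI uv)).
Qed.

End SplitGraph.

Section PairwiseNearNeighbourhoods.
Variables (T : finType) (e : rel T) (K I : {set T}).
Hypothesis e_sym : symmetric e.
Hypothesis HS : split_bipartition e K I.
Hypothesis HK : K = \bigcup_(v in I) nbhd e v.
Hypothesis twoI : 1 < #|I|.
Hypothesis private : forall u v, u \in I -> v \in I -> u != v ->
  exists b, b \in nbhd e u :\: nbhd e v.

Lemma exists_other_indep v : exists2 w, w \in I & w != v.
Proof.
have [u [w [uI wI uw]]] := card_gt1P twoI.
by case: (eqVneq u v) => [<-|uv]; [exists w; rewrite // eq_sym | exists u].
Qed.

Lemma clique_indep_nbr x : x \in K -> exists2 v, v \in I & e v x.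
Proof. by rewrite HK => /bigcupP[v vI]; rewrite inE; exists v. Qed.

Lemma card_nbhd_lt_clique v : v \in I -> #|nbhd e v| < #|K|.
Proof.
move=> vI; have [w wI wv] := exists_other_indep v.
have [b] := private wI vI wv; rewrite inE => /andP[bv bw].
apply: proper_card; apply/properP; split; last first.
  by exists b; rewrite // (split_indep_adj_clique HS wI) // -inE.
by apply/subsetP=> z; rewrite inE => evz; exact: (split_indep_adj_clique HS vI evz).
Qed.

Lemma clique_number_split : clique_number e = #|K|.
Proof.
apply/eqP; rewrite eqn_leq; apply/andP; split; last first.
  by apply: (@leq_bigmax_cond _ _ (fun X : {set T} => #|X|)); case: HS.
apply/bigmax_leqP=> X /cliqueP clX.
have [//|/subsetPn[v vX vK]] := boolP (X \subset K); first exact: subset_leq_card.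
have vI : v \in I by apply: contraR vK => /(split_notin_indep_clique HS).
have /subset_leq_card : X :\ v \subset nbhd e v.
  by apply/subsetP=> y; rewrite in_setD1 inE => /andP[yv yX]; rewrite clX // eq_sym.
by rewrite (cardsD1 v X) vX => /leq_ltn_trans/(_ (card_nbhd_lt_clique vI)).
Qed.

Lemma indep_number_split : indep_number e = #|I|.
Proof.
apply/eqP; rewrite eqn_leq; apply/andP; split; last first.
  by apply: (@leq_bigmax_cond _ _ (fun X : {set T} => #|X|)); case: HS.
apply/bigmax_leqP=> X /indepP indX.
have [//|/subsetPn[w wX wI]] := boolP (X \subset I); first exact: subset_leq_card.
have wK := split_notin_indep_clique HS wI.
have [v vI evw] := clique_indep_nbr wK.
have /subset_leq_card : X :\ w \subset I :\ v.
  apply/subsetP=> y; rewrite !in_setD1 => /andP[yw yX].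
  have yI : y \in I.
    apply: contraTT (indX w y wX yX) => /(split_notin_indep_clique HS) yK.
    by rewrite (split_clique_adj HS) // eq_sym.
  by rewrite yI andbT; apply: contraNneq (indX w y wX yX) => ->; rewrite e_sym.
by rewrite (cardsD1 v I) (cardsD1 w X) vI wX.
Qed.

Lemma universal_setE : universal_set e = \bigcap_(v in I) nbhd e v.
Proof.
apply/setP=> x; rewrite inE; apply/forallP/bigcapP=> [univ v vI|adj y].
  have xI : x \notin I.
    apply/negP=> xI; have [w wI wx] := exists_other_indep x.
    by have := univ w; rewrite wx /= (negbTE (split_indep_nadj HS xI wI)).
  rewrite inE e_sym; apply: (implyP (univ v)).
  by apply: contraNneq xI => <-.
apply/implyP=> yx.
have [yI|yI] := boolP (y \in I); first by have := adj y yI; rewrite inE e_sym.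
have [u uI] : exists u, u \in I by apply/set0Pn; rewrite -card_gt0 ltnW.
have xK : x \in K by apply: (split_indep_adj_clique HS uI); rewrite -inE adj.
by rewrite (split_clique_adj HS xK (split_notin_indep_clique HS yI)) // eq_sym.
Qed.

Lemma nonuniversal_active x : x \notin universal_set e -> is_active_vertex e x.
Proof.
move=> xU; have [xI|xI] := boolP (x \in I).
  have [u uI ux] := exists_other_indep x.
  have xu : x != u by rewrite eq_sym.
  have [b] := private xI uI xu.
  have [c] := private uI xI ux.
  rewrite !inE => /andP[nexc euc] /andP[neub exb].
  have [bK cK] := (split_indep_adj_clique HS xI exb, split_indep_adj_clique HS uI euc).
  exists x, b, c, u; split; last by rewrite inE eqxx.
  split; [|done|by rewrite e_sym|done|by rewrite e_sym].
  rewrite /= !inE !negb_or xu !(split_indep_clique_neq HS xI) //.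
  rewrite ![_ == u]eq_sym !(split_indep_clique_neq HS uI) // !andbT.
  by apply: contraNneq nexc => <-.
have xK := split_notin_indep_clique HS xI.
move: xU; rewrite inE negb_forall => /existsP[y]; rewrite negb_imply => /andP[yx nexy].
have yI : y \in I.
  apply: contraNT nexy => /(split_notin_indep_clique HS) yK.
  by rewrite (split_clique_adj HS) // eq_sym.
have [v vI evx] := clique_indep_nbr xK.
have yv : y != v by apply: contraNneq nexy => ->; rewrite e_sym.
have [q] := private yI vI yv; rewrite !inE => /andP[nevq eyq].
have qK := split_indep_adj_clique HS yI eyq.
exists x, v, y, q; split; last by rewrite inE eqxx.
split; [|by rewrite e_sym|done|done|done].
rewrite /= !inE !negb_or ![x == _]eq_sym (eq_sym v y) yx yv.
rewrite (split_indep_clique_neq HS vI xK) !(split_indep_clique_neq HS _ qK) // !andbT.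
by apply: contraNneq nexy => <-; rewrite e_sym.
Qed.

Lemma active_graphE : is_active_graph e <-> universal_set e = set0.
Proof.
split=> [act|U0 x]; last by apply: nonuniversal_active; rewrite U0 inE.
by apply/setP=> x; rewrite in_set0; apply/negbTE/(active_vertex_nonuniversal e_sym).
Qed.

End PairwiseNearNeighbourhoods.

Theorem theorem4p3 (T : finType) (e : rel T)
    (e_sym : symmetric e) (e_irr : irreflexive e)
    (K I : {set T})
    (HS : split_bipartition e K I)
    (Hsimple : factor_simple e I) (Hcomplete : factor_complete e I)
    (HK : K = \bigcup_(v in I) nbhd e v)
    (Halpha : 2 <= #|I|) :
  let omega := #|K| in
  let alpha := #|I| in
  let U := universal_set e in
  [/\ (* (1) *) homogeneous e K I,
      (* (6) *) omega = alpha + #|U|,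
      (* (7) *) (is_active_graph e <-> U = set0)
    & forall d : nat, (forall v, v \in I -> deg e v = d) ->
      [/\ (* (2) *) 1 <= d <= omega - 1,
          (* (3) *) #|U| = d - 1 \/ #|U| + alpha = d + 1,
          (* (4) *) (#|U| = d - 1 <-> omega = alpha + d - 1)
        & (* (5) *) (#|U| + alpha = d + 1 <-> omega = d + 1)] /\
      [/\ (* (8) *) (is_active_graph e -> omega = alpha /\ (d = 1 \/ d = omega - 1))
        & (* (9) *) (omega = alpha \/ d = 1 -> is_active_graph e)]].
Proof.
move=> omega alpha U; rewrite {}/omega {}/alpha {}/U.
have near u v : u \in I -> v \in I -> u != v -> #|nbhd e u :\: nbhd e v| = 1.
  move=> uI vI uv; exact: (cardsD_nbhd_eq1 e_sym HS Hsimple Hcomplete uI vI uv).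
have private u v :
    u \in I -> v \in I -> u != v -> exists b, b \in nbhd e u :\: nbhd e v.
  move=> uI vI uv; exact: (private_nbhd e_sym HS Hcomplete uI vI uv).
have [u0 [v0 [u0I _ _]]] := card_gt1P Halpha.
have deg_u0 v : v \in I -> #|nbhd e v| = deg e u0.
  move=> vI; have [-> //|vu0] := eqVneq v u0.
  by apply: eq_card_of_cardsD; rewrite !near // eq_sym.
have [cardK cardU] := near_family_card deg_u0 near Halpha.
rewrite -HK -(universal_setE e_sym HS Halpha) in cardK cardU.
have deg_lt := card_nbhd_lt_clique HS Halpha private u0I.
have activeE := active_graphE e_sym HS HK Halpha private.
have active : is_active_graph e <-> #|universal_set e| = 0.
  apply: iff_trans activeE _.
  by split=> [->|/eqP]; rewrite ?cards0 // cards_eq0 => /eqP.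
split=> //.
- split; last by move=> u v uI vI; rewrite /deg !deg_u0.
  split; first by rewrite (clique_number_split HS Halpha private).
  by rewrite (indep_number_split e_sym HS HK).
move=> d degI; rewrite -(degI u0 u0I) /deg in cardU deg_lt *.
split; first by split; lia.
split=> [/active|H]; [lia | apply/active; lia].
Qed.
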